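(* Let $k \ge 1$ and let $V = L \sqcup R$ be a finite set of nails split into disjoint parts with $|L| = n_1$, $|R| = n_2$. Call an integer $j$ feasible if $\max(0, k - n_2) \le j \le \min(k, n_1)$. For a set $J$ of feasible indices define the function $f_J$ on subsets $S \subseteq V$ by $f_J(S) = \mathsf{fall}$ if there is $j \in J$ with $|S \cap L| \ge j$ and $|S \cap R| \ge k - j$, and $f_J(S) = \mathsf{hang}$ otherwise. Let $J_1, J_2$ be disjoint nonempty sets of feasible indices, and let $S \subseteq V$ satisfy $f_{J_1}(S) = f_{J_2}(S) = \mathsf{hang}$. Then there exists $S'$ with $S \subseteq S' \subseteq V$ and $f_{J_1}(S') \ne f_{J_2}(S')$.
   Context: Nails are elements of a finite set; the outcomes are $\mathsf{hang}$ and $\mathsf{fall}$. *)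

From mathcomp Require Import all_boot.
Set Implicit Arguments. Unset Strict Implicit. Unset Printing Implicit Defensive.

Inductive outcome := hang | fall.

(* Feasible index j for threshold k and parts L, R:
   max(0, k - n2) <= j <= min(k, n1); truncated subtraction gives max(0,k-n2). *)
Definition feasible {T : finType} (k : nat) (L R : {set T}) (j : nat) : bool :=
  (k - #|R| <= j) && (j <= minn k #|L|).

Definition fJ {T : finType} (k : nat) (L R : {set T}) (J : seq nat) (S : {set T})
  : outcome :=
  if has (fun j => (j <= #|S :&: L|) && (k - j <= #|S :&: R|)) J then fall else hang.

(* At S every index of J1 ++ J2 hangs: j > |S ∩ L| or j < k - |S ∩ R|.
   Pick the pivot j* among them: the largest index below k - |S ∩ R|, or the
   least index if there is none.  Enlarge S inside L up to j* nails and inside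
   R up to k - j* nails (feasibility of j* makes room for both).  Then j* falls
   while every other index still hangs: indices above j* are >= k - |S ∩ R|,
   hence exceed |S ∩ L|; indices below j* are < k - |S ∩ R|.  So exactly one
   of f_J1, f_J2 falls at the enlarged set. *)
From mathcomp Require Import all_boot.
From mathcomp Require Import zify.

Set Implicit Arguments.
Unset Strict Implicit.
Unset Printing Implicit Defensive.

Definition falls (k a b j : nat) : bool := (j <= a) && (k - j <= b).

Lemma fJE (T : finType) k (L R : {set T}) J S :
  fJ k L R J S = if has (falls k #|S :&: L| #|S :&: R|) J then fall else hang.
Proof. by []. Qed.

Lemma feasible_bounds (T : finType) k (L R : {set T}) j :
  feasible k L R j -> [/\ k - #|R| <= j, j <= k & j <= #|L|].
Proof. by case/andP=> ->; rewrite leq_min => /andP[-> ->]. Qed.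

(* x is the largest element of s below c, or the least element of s if there
   is none. *)
Lemma exists_pivot (c : nat) (s : seq nat) : s != [::] ->
  exists2 x, x \in s &
    forall y, y \in s -> (x < y -> c <= y) /\ (y < x -> y < c).
Proof.
move=> s_nil.
have [/hasP[y0 y0s y0c] | /hasPn above] := boolP (has (ltn^~ c) s).
  have ex_below : exists y, (y \in s) && (y < c) by exists y0; rewrite y0s.
  have below_bounded y : (y \in s) && (y < c) -> y <= c by case/andP=> _ /ltnW.
  have [x /andP[xs xc] x_max] := ex_maxnP ex_below below_bounded.
  exists x => // y ys; split=> [xy | yx]; last by lia.
  by rewrite leqNgt; apply/negP=> yc; have := x_max y; rewrite ys yc; lia.
have ex_mem : exists y, y \in s.
  by case: s s_nil {above} => // y s' _; exists y; exact: mem_head.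
have [x xs x_min] := ex_minnP ex_mem.
exists x => // y ys; split=> [_ | yx]; first by rewrite leqNgt above.
by have := x_min y ys; lia.
Qed.

Lemma exists_single_falling (k a b : nat) (s : seq nat) :
  s != [::] -> all (leq^~ k) s -> ~~ has (falls k a b) s ->
  exists2 x, x \in s & {in s, falls k (maxn a x) (maxn b (k - x)) =1 pred1 x}.
Proof.
move=> s_nil /allP le_k /hasPn hang_ab.
have [x xs x_pivot] := exists_pivot (k - b) s_nil.
exists x => // j js /=.
have := hang_ab j js; have := le_k j js; have := le_k x xs; rewrite /falls.
have [x_j | j_x | ->] := ltngtP x j; last by lia.
- by have := (x_pivot j js).1 x_j; lia.
- by have := (x_pivot j js).2 j_x; lia.
Qed.

Lemma exists_subset_card (T : finType) (A : {set T}) m :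
  m <= #|A| -> exists2 X : {set T}, X \subset A & #|X| = m.
Proof.
rewrite -bin_gt0 -cards_draws => /card_gt0P[X].
by rewrite inE => /andP[XA /eqP cardX]; exists X.
Qed.

Lemma exists_grow_within (T : finType) (S A : {set T}) m :
  m <= #|A| ->
  exists2 X : {set T}, X \subset A & #|(S :|: X) :&: A| = maxn #|S :&: A| m.
Proof.
move=> le_mA.
have le_SA : #|S :&: A| <= #|A| by rewrite subset_leq_card ?subsetIr.
have [|X] := @exists_subset_card _ (A :\: S) (m - #|S :&: A|).
  by rewrite cardsD setIC; lia.
rewrite subsetD => /andP[XA dXS] cardX; exists X => //.
have dSAX : [disjoint S :&: A & X].
  by rewrite disjoint_sym; apply: disjointWr (subsetIl S A) dXS.
rewrite setIUl (setIidPl XA) cardsU (disjoint_setI0 dSAX) cards0 cardX; lia.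
Qed.

Lemma setUI_disjoint (T : finType) (A B C : {set T}) :
  [disjoint B & C] -> (A :|: B) :&: C = A :&: C.
Proof. by move=> dBC; rewrite setIUl (disjoint_setI0 dBC) setU0. Qed.

Lemma exists_grow_parts (T : finType) (L R S : {set T}) m n :
  [disjoint L & R] -> m <= #|L| -> n <= #|R| ->
  exists2 S' : {set T}, S \subset S' &
    #|S' :&: L| = maxn #|S :&: L| m /\ #|S' :&: R| = maxn #|S :&: R| n.
Proof.
move=> dLR /(exists_grow_within S)[X XL cardXL].
move=> /(exists_grow_within S)[Y YR cardYR].
exists (S :|: X :|: Y); first by rewrite -setUA subsetUl.
split; first by rewrite setUI_disjoint // (disjointWl YR) // disjoint_sym.
by rewrite setUAC setUI_disjoint // (disjointWl XL).
Qed.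

Theorem lemma3 (T : finType) (L R : {set T}) (k : nat) (J1 J2 : seq nat)
  (S : {set T}) :
  1 <= k ->
  [disjoint L & R] -> L :|: R = [set: T] ->
  all (feasible k L R) J1 -> all (feasible k L R) J2 ->
  J1 != [::] -> J2 != [::] ->
  (forall j, j \in J1 -> j \notin J2) ->
  fJ k L R J1 S = hang -> fJ k L R J2 S = hang ->
  exists S' : {set T}, S \subset S' /\ fJ k L R J1 S' <> fJ k L R J2 S'.
Proof.
move=> _ dLR _ feas1 feas2 J1_nil _ dJ.
rewrite !fJE; set a := #|S :&: L|; set b := #|S :&: R|.
case: ifP => // hang1 _; case: ifP => // hang2 _.
have feas : all (feasible k L R) (J1 ++ J2) by rewrite all_cat feas1.
have J_nil : J1 ++ J2 != [::] by case: (J1) J1_nil.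
have le_k : all (leq^~ k) (J1 ++ J2).
  by apply: sub_all feas => j /feasible_bounds[].
have hang : ~~ has (falls k a b) (J1 ++ J2) by rewrite has_cat hang1 hang2.
have [x xJ falls_x] := exists_single_falling J_nil le_k hang.
have [le_kRx _ le_xL] := feasible_bounds (allP feas x xJ).
have le_kxR : k - x <= #|R| by lia.
have [S' SS' [cardL cardR]] := exists_grow_parts S dLR le_xL le_kxR.
exists S'; split => //; rewrite !fJE cardL cardR.
have hasE J : {subset J <= J1 ++ J2} ->
    has (falls k (maxn a x) (maxn b (k - x))) J = (x \in J).
  by move=> sJ; rewrite -has_pred1; apply: eq_in_has => j /sJ; apply: falls_x.
rewrite (hasE _ (mem_subseq (prefix_subseq _ _))).
rewrite (hasE _ (mem_subseq (suffix_subseq _ _))).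
move: xJ; rewrite mem_cat.
by have [/dJ/negbTE -> | _ /= ->] := boolP (x \in J1).
Qed.
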